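(* $\mathsf{Seq}$ interprets $\mathsf{Seq}^+$.
   Context: $\mathsf{Seq}$ is the theory in the language $\{e,\vdash,\circ\}$ ($e$ constant, $\vdash$ and $\circ$ binary functions) with axioms: ($\mathsf{Seq}_1$) $\forall xy[x\vdash y\neq e]$; ($\mathsf{Seq}_2$) $\forall x_1x_2y_1y_2[x_1\vdash x_2=y_1\vdash y_2\rightarrow(x_1=y_1\wedge x_2=y_2)]$; ($\mathsf{Seq}_3$) $\forall x[x\circ e=x]$; ($\mathsf{Seq}_4$) $\forall xyz[x\circ(y\vdash z)=(x\circ y)\vdash z]$; ($\mathsf{Seq}_5$) $\forall x[x=e\vee\exists yz[x=y\vdash z]]$. $\mathsf{Seq}^+$ is the theory in the same language with axioms $\mathsf{Seq}_1,\ldots,\mathsf{Seq}_5$ together with ($\mathsf{Seq}^*_3$) $\forall x[x\circ e=x\wedge e\circ x=x]$, ($\mathsf{Seq}^*_5$) $\forall xyzw[x\circ y=z\circ w\leftrightarrow\exists u[(z=x\circ u\wedge u\circ w=y)\vee(x=z\circ u\wedge u\circ y=w)]]$, and ($\mathsf{Seq}^+_c$) $\forall xyz[(x\circ y=x\circ z\vee y\circ x=z\circ x)\rightarrow y=z]$. *)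

(* First-order syntax for the language {e, |-, o},
   Tarski semantics, and (multi-dimensional, parameter-free) relative
   interpretations between theories in this language, stated
   semantically (via the completeness theorem: "T proves phi" is read
   as "phi holds in every model of T"). *)
From Stdlib Require Import Arith.

Inductive term : Type :=
  | tvar (n : nat)
  | te
  | tvd (s t : term)   (* s |- t *)
  | tci (s t : term).  (* s o t  *)

Inductive form : Type :=
  | fEq (s t : term)
  | fBot
  | fImp (A B : form)
  | fAnd (A B : form)
  | fOr (A B : form)
  | fAll (n : nat) (A : form)
  | fEx (n : nat) (A : form).

Section Semantics.
Variables (M : Type) (eM : M) (vdM ciM : M -> M -> M).

Fixpoint eval (rho : nat -> M) (t : term) : M :=
  match t with
  | tvar n => rho n
  | te => eM
  | tvd s u => vdM (eval rho s) (eval rho u)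
  | tci s u => ciM (eval rho s) (eval rho u)
  end.

Definition upd (rho : nat -> M) (n : nat) (a : M) : nat -> M :=
  fun k => if Nat.eqb k n then a else rho k.

Fixpoint sat (rho : nat -> M) (A : form) : Prop :=
  match A with
  | fEq s t => eval rho s = eval rho t
  | fBot => False
  | fImp A B => sat rho A -> sat rho B
  | fAnd A B => sat rho A /\ sat rho B
  | fOr A B => sat rho A \/ sat rho B
  | fAll n A => forall a : M, sat (upd rho n a) A
  | fEx n A => exists a : M, sat (upd rho n a) A
  end.

(** Environment for m-dimensional tuples x, y, z : the variables
    0..m-1 denote x, m..2m-1 denote y, 2m..3m-1 denote z; all other
    variables are assigned the (definable) constant e. *)
Definition env3 (m : nat) (x y z : nat -> M) : nat -> M :=
  fun k => if Nat.ltb k m then x k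
           else if Nat.ltb k (2 * m) then y (k - m)
           else if Nat.ltb k (3 * m) then z (k - 2 * m)
           else eM.

Definition dflt : nat -> M := fun _ => eM.
End Semantics.

(** * Theories in the language, presented by their axioms,
    evaluated in a "setoid structure" (A, eqv, e, |-, o) in which the
    symbol = is read as eqv.  A genuine structure is the case eqv = eq. *)

Definition Seq_ax (A : Type) (eqv : A -> A -> Prop) (e : A)
    (vd ci : A -> A -> A) : Prop :=
  (forall x y, ~ eqv (vd x y) e) /\
  (forall x1 x2 y1 y2, eqv (vd x1 x2) (vd y1 y2) -> eqv x1 y1 /\ eqv x2 y2) /\
  (forall x, eqv (ci x e) x) /\
  (forall x y z, eqv (ci x (vd y z)) (vd (ci x y) z)) /\
  (forall x, eqv x e \/ exists y z, eqv x (vd y z)).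

Definition SeqPlus_ax (A : Type) (eqv : A -> A -> Prop) (e : A)
    (vd ci : A -> A -> A) : Prop :=
  Seq_ax A eqv e vd ci /\
  (forall x, eqv (ci x e) x /\ eqv (ci e x) x) /\
  (forall x y z w, eqv (ci x y) (ci z w) <->
     exists u, (eqv z (ci x u) /\ eqv (ci u w) y) \/
               (eqv x (ci z u) /\ eqv (ci u y) w)) /\
  (forall x y z, (eqv (ci x y) (ci x z) \/ eqv (ci y x) (ci z x)) -> eqv y z).

Definition theory := forall A : Type, (A -> A -> Prop) -> A ->
  (A -> A -> A) -> (A -> A -> A) -> Prop.

(** An m-dimensional (parameter-free) translation: a domain formula
    (free variables 0..m-1), a formula for the translated equality
    (x: 0..m-1, y: m..2m-1), a formula for the graph of e (x), and
    formulas for the graphs of |- and o  (z = x |- y, z = x o y with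
    x, y, z in the three blocks of variables). *)
Record translation : Type := {
  dim : nat;
  tr_dom : form;
  tr_eq : form;
  tr_e : form;
  tr_vd : form;
  tr_ci : form }.

Section Interpretation.
Variables (I : translation) (M : Type) (eM : M) (vdM ciM : M -> M -> M).

Let m := dim I.
Let S3 (A : form) (x y z : nat -> M) := sat M eM vdM ciM (env3 M eM m x y z) A.
Let d := dflt M eM.

Definition iDom (x : nat -> M) : Prop := S3 (tr_dom I) x d d.
Definition iEq (x y : nat -> M) : Prop := S3 (tr_eq I) x y d.
Definition iE (x : nat -> M) : Prop := S3 (tr_e I) x d d.
Definition iVd (x y z : nat -> M) : Prop := S3 (tr_vd I) x y z.
Definition iCi (x y z : nat -> M) : Prop := S3 (tr_ci I) x y z.

Definition iD : Type := { x : nat -> M | iDom x }.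
Definition iEqD (x y : iD) : Prop := iEq (proj1_sig x) (proj1_sig y).

Definition defines_model_of (U : theory) : Prop :=
  (forall x, iDom x -> iEq x x) /\
  (forall x y, iDom x -> iDom y -> iEq x y -> iEq y x) /\
  (forall x y z, iDom x -> iDom y -> iDom z -> iEq x y -> iEq y z -> iEq x z) /\
  (forall x x', iDom x -> iDom x' -> iEq x x' -> iE x -> iE x') /\
  (forall x x' y y' z z', iDom x -> iDom x' -> iDom y -> iDom y' ->
     iDom z -> iDom z' -> iEq x x' -> iEq y y' -> iEq z z' ->
     iVd x y z -> iVd x' y' z') /\
  (forall x x' y y' z z', iDom x -> iDom x' -> iDom y -> iDom y' ->
     iDom z -> iDom z' -> iEq x x' -> iEq y y' -> iEq z z' ->
     iCi x y z -> iCi x' y' z') /\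
  (forall x x', iDom x -> iDom x' -> iE x -> iE x' -> iEq x x') /\
  (forall x y z z', iDom x -> iDom y -> iDom z -> iDom z' ->
     iVd x y z -> iVd x y z' -> iEq z z') /\
  (forall x y z z', iDom x -> iDom y -> iDom z -> iDom z' ->
     iCi x y z -> iCi x y z' -> iEq z z') /\
  exists (e0 : iD) (vd0 ci0 : iD -> iD -> iD),
    iE (proj1_sig e0) /\
    (forall x y, iVd (proj1_sig x) (proj1_sig y) (proj1_sig (vd0 x y))) /\
    (forall x y, iCi (proj1_sig x) (proj1_sig y) (proj1_sig (ci0 x y))) /\
    U iD iEqD e0 vd0 ci0.
End Interpretation.

(** T interprets U: there is a single translation which, in every model
    of T, defines a model of U (equivalently, by completeness, T proves
    the translations of the axioms of U and the well-definedness
    conditions of the translation). *)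
Definition interprets (T U : theory) : Prop :=
  exists I : translation,
    forall (M : Type) (eM : M) (vdM ciM : M -> M -> M),
      T M (@eq M) eM vdM ciM -> defines_model_of I M eM vdM ciM U.


(* Seq⁺ is interpreted in Seq by relativization to a definable class of
   "good" elements, keeping e, ⊢ and ∘ unchanged.  Call q regular when ∘
   behaves well with q on the right: (a ∘ c) ∘ q = a ∘ (c ∘ q), e ∘ q = q,
   q can be cancelled on the right, Levi's lemma (x ∘ y = z ∘ q splits
   through a common u) holds, the entries of a ∘ q are those of a and of q,
   and p ∘ q is rigid whenever p is, where p is rigid if p ∘ W ∘ U = p
   forces W = e.  Each of these properties holds for e and passes to q ⊢ a
   and to p ∘ q, so regular elements are closed under the operations
   without any induction.  An element is good when all its prefixes are
   regular, and hereditarily so for all its entries; the good elements form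
   a substructure that is also closed under ⊢-decomposition and prefixes,
   and on it the extra axioms of Seq⁺ are exactly the properties of regular
   elements (left cancellation being rigidity plus Levi's lemma). *)

Definition relativization (dom : form) : translation := {|
  dim := 1;
  tr_dom := dom;
  tr_eq := fEq (tvar 0) (tvar 1);
  tr_e := fEq (tvar 0) te;
  tr_vd := fEq (tvar 2) (tvd (tvar 0) (tvar 1));
  tr_ci := fEq (tvar 2) (tci (tvar 0) (tvar 1)) |}.

Section Relativization.
Variables (M : Type) (e : M) (vd ci : M -> M -> M) (dom : form) (P : M -> Prop).
Hypothesis dom_iff : forall x, iDom (relativization dom) M e vd ci x <-> P (x 0).
Hypotheses (P_e : P e)
  (P_vd : forall a b, P a -> P b -> P (vd a b))
  (P_ci : forall a b, P a -> P b -> P (ci a b)).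

Local Notation D := (iD (relativization dom) M e vd ci).

Definition rel_val (x : D) : M := proj1_sig x 0.

Lemma rel_val_P (x : D) : P (rel_val x).
Proof. exact (proj1 (dom_iff _) (proj2_sig x)). Qed.

Definition rel_mk (a : M) (Ha : P a) : D :=
  exist _ (fun _ => a) (proj2 (dom_iff _) Ha).

Definition rel_e : D := rel_mk e P_e.

Definition rel_vd (x y : D) : D :=
  rel_mk (vd (rel_val x) (rel_val y)) (P_vd _ _ (rel_val_P x) (rel_val_P y)).

Definition rel_ci (x y : D) : D :=
  rel_mk (ci (rel_val x) (rel_val y)) (P_ci _ _ (rel_val_P x) (rel_val_P y)).

Lemma relativization_defines_model (U : theory) :
  U D (iEqD (relativization dom) M e vd ci) rel_e rel_vd rel_ci ->
  defines_model_of (relativization dom) M e vd ci U.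
Proof.
  intros HU; unfold defines_model_of, iEq, iE, iVd, iCi; cbn.
  repeat split; try (intros; congruence).
  exists rel_e, rel_vd, rel_ci; repeat split; exact HU.
Qed.

End Relativization.

Section GoodElements.
Variables (M : Type) (e : M) (vd ci : M -> M -> M).

Local Infix "⊢" := vd (at level 40, left associativity).
Local Infix "∘" := ci (at level 40, left associativity).

Definition assoc_at (y : M) : Prop := forall a c, a ∘ c ∘ y = a ∘ (c ∘ y).
Definition left_unit_at (y : M) : Prop := e ∘ y = y.
Definition cancel_at (y : M) : Prop := forall a c, a ∘ y = c ∘ y -> a = c.
Definition occurs (w t : M) : Prop := exists p q, t = (p ⊢ w) ∘ q.
Definition occurs_split_at (t : M) : Prop :=
  forall a w, occurs w (a ∘ t) <-> occurs w a \/ occurs w t.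
Definition levi_at (w : M) : Prop :=
  forall x z y, assoc_at y -> x ∘ y = z ∘ w ->
  exists u, assoc_at u /\ ((z = x ∘ u /\ u ∘ w = y) \/ (x = z ∘ u /\ u ∘ y = w)).
Definition rigid (x : M) : Prop :=
  forall W, assoc_at W -> forall U, x ∘ W ∘ U = x -> W = e.
Definition regular (q : M) : Prop :=
  left_unit_at q /\ assoc_at q /\ levi_at q /\ cancel_at q /\ occurs_split_at q /\
  (forall p, rigid p -> rigid (p ∘ q)).
Definition prefix_regular (x : M) : Prop :=
  forall p q, assoc_at q -> p ∘ q = x -> regular p.

(* [s] collects the entries of [x] hereditarily; it is needed because the
   right component [z] of [y ⊢ z] is not a prefix of [y ⊢ z]. *)
Definition good (x : M) : Prop :=
  prefix_regular x /\
  exists s, prefix_regular s /\ (forall w, occurs w x -> occurs w s) /\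
    (forall w, occurs w s -> prefix_regular w /\ forall v, occurs v w -> occurs v s).

(* [fP t b] expresses [P t] using the variables [b], [b+1], ... as bound
   variables, which [t] must not mention; [good_formula] starts at 3, above
   the variables 0-2 of [relativization].  For concrete indices,
   satisfaction of [fP] unfolds definitionally to [P], see [iDom_good]. *)
Definition fassoc_at (t : term) (b : nat) : form :=
  fAll b (fAll (b+1)
    (fEq (tci (tci (tvar b) (tvar (b+1))) t) (tci (tvar b) (tci (tvar (b+1)) t)))).
Definition fleft_unit_at (t : term) : form := fEq (tci te t) t.
Definition fcancel_at (t : term) (b : nat) : form :=
  fAll b (fAll (b+1)
    (fImp (fEq (tci (tvar b) t) (tci (tvar (b+1)) t)) (fEq (tvar b) (tvar (b+1))))).
Definition foccurs (w t : term) (b : nat) : form :=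
  fEx b (fEx (b+1) (fEq t (tci (tvd (tvar b) w) (tvar (b+1))))).
Definition fiff (A B : form) : form := fAnd (fImp A B) (fImp B A).
Definition foccurs_split_at (t : term) (b : nat) : form :=
  fAll b (fAll (b+1) (fiff (foccurs (tvar (b+1)) (tci (tvar b) t) (b+2))
    (fOr (foccurs (tvar (b+1)) (tvar b) (b+2)) (foccurs (tvar (b+1)) t (b+2))))).
Definition flevi_at (t : term) (b : nat) : form :=
  fAll b (fAll (b+1) (fAll (b+2) (fImp (fassoc_at (tvar (b+2)) (b+3))
    (fImp (fEq (tci (tvar b) (tvar (b+2))) (tci (tvar (b+1)) t))
      (fEx (b+3) (fAnd (fassoc_at (tvar (b+3)) (b+4))
        (fOr (fAnd (fEq (tvar (b+1)) (tci (tvar b) (tvar (b+3))))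
                   (fEq (tci (tvar (b+3)) t) (tvar (b+2))))
             (fAnd (fEq (tvar b) (tci (tvar (b+1)) (tvar (b+3))))
                   (fEq (tci (tvar (b+3)) (tvar (b+2))) t))))))))).
Definition frigid (t : term) (b : nat) : form :=
  fAll b (fImp (fassoc_at (tvar b) (b+1))
    (fAll (b+1) (fImp (fEq (tci (tci t (tvar b)) (tvar (b+1))) t) (fEq (tvar b) te)))).
Definition fregular (t : term) (b : nat) : form :=
  fAnd (fleft_unit_at t) (fAnd (fassoc_at t b) (fAnd (flevi_at t b)
    (fAnd (fcancel_at t b) (fAnd (foccurs_split_at t b)
      (fAll b (fImp (frigid (tvar b) (b+1)) (frigid (tci (tvar b) t) (b+1)))))))).
Definition fprefix_regular (t : term) (b : nat) : form :=
  fAll b (fAll (b+1) (fImp (fassoc_at (tvar (b+1)) (b+2))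
    (fImp (fEq (tci (tvar b) (tvar (b+1))) t) (fregular (tvar b) (b+2))))).
Definition fgood (t : term) (b : nat) : form :=
  fAnd (fprefix_regular t b) (fEx b (fAnd (fprefix_regular (tvar b) (b+1)) (fAnd
    (fAll (b+1) (fImp (foccurs (tvar (b+1)) t (b+2)) (foccurs (tvar (b+1)) (tvar b) (b+2))))
    (fAll (b+1) (fImp (foccurs (tvar (b+1)) (tvar b) (b+2))
      (fAnd (fprefix_regular (tvar (b+1)) (b+2))
        (fAll (b+2) (fImp (foccurs (tvar (b+2)) (tvar (b+1)) (b+3))
                          (foccurs (tvar (b+2)) (tvar b) (b+3)))))))))).

Definition good_formula : form := fgood (tvar 0) 3.
Definition good_translation : translation := relativization good_formula.

Lemma iDom_good (x : nat -> M) : iDom good_translation M e vd ci x <-> good (x 0).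
Proof. split; trivial. Qed.

Hypothesis vd_neq_e : forall x y, x ⊢ y <> e.
Hypothesis vd_inj : forall x1 x2 y1 y2, x1 ⊢ x2 = y1 ⊢ y2 -> x1 = y1 /\ x2 = y2.
Hypothesis ci_e : forall x, x ∘ e = x.
Hypothesis ci_vd : forall x y z, x ∘ (y ⊢ z) = x ∘ y ⊢ z.
Hypothesis e_or_vd : forall x, x = e \/ exists y z, x = y ⊢ z.

Lemma ci_eq_e x y : x ∘ y = e -> x = e /\ y = e.
Proof.
  intros H; destruct (e_or_vd y) as [-> | (y1 & c & ->)].
  - rewrite ci_e in H; auto.
  - rewrite ci_vd in H; destruct (vd_neq_e _ _ H).
Qed.

Lemma assoc_at_e : assoc_at e.
Proof. intros a c; rewrite !ci_e; reflexivity. Qed.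

Lemma assoc_at_vd y a : assoc_at y -> assoc_at (y ⊢ a).
Proof. intros Hy b c; rewrite !ci_vd, Hy; reflexivity. Qed.

Lemma assoc_at_vd_inv y a : assoc_at (y ⊢ a) -> assoc_at y.
Proof. intros Hy b c; specialize (Hy b c); rewrite !ci_vd in Hy; apply vd_inj in Hy; tauto. Qed.

Lemma assoc_at_ci p q : assoc_at p -> assoc_at q -> assoc_at (p ∘ q).
Proof. intros Hp Hq a b; rewrite <- (Hq (a ∘ b) p), Hp, Hq, Hq; reflexivity. Qed.

Lemma left_unit_at_e : left_unit_at e.
Proof. apply ci_e. Qed.

Lemma left_unit_at_vd y a : left_unit_at y -> left_unit_at (y ⊢ a).
Proof. unfold left_unit_at; intros Hy; rewrite ci_vd, Hy; reflexivity. Qed.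

Lemma left_unit_at_ci p q : assoc_at q -> left_unit_at p -> left_unit_at (p ∘ q).
Proof. unfold left_unit_at; intros Hq Hp; rewrite <- Hq, Hp; reflexivity. Qed.

Lemma cancel_at_e : cancel_at e.
Proof. intros a c; rewrite !ci_e; trivial. Qed.

Lemma cancel_at_vd y b : cancel_at y -> cancel_at (y ⊢ b).
Proof. intros Hy a c H; rewrite !ci_vd in H; apply vd_inj in H; apply Hy; tauto. Qed.

Lemma cancel_at_ci p q : assoc_at q -> cancel_at p -> cancel_at q -> cancel_at (p ∘ q).
Proof. intros Aq Cp Cq a c H; rewrite <- !Aq in H; apply Cp, Cq, H. Qed.

Lemma not_occurs_e w : ~ occurs w e.
Proof.
  intros (p & q & H); symmetry in H.
  exact (vd_neq_e _ _ (proj1 (ci_eq_e _ _ H))).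
Qed.

Lemma occurs_vd w y z : occurs w (y ⊢ z) <-> w = z \/ occurs w y.
Proof.
  split.
  - intros (p & q & H); destruct (e_or_vd q) as [-> | (q1 & c & ->)].
    + rewrite ci_e in H; apply vd_inj in H; left; symmetry; tauto.
    + rewrite ci_vd in H; apply vd_inj in H; right; exists p, q1; tauto.
  - intros [-> | (p & q & ->)].
    + exists y, e; rewrite ci_e; reflexivity.
    + exists p, (q ⊢ z); rewrite ci_vd; reflexivity.
Qed.

Lemma occurs_split_at_e : occurs_split_at e.
Proof. intros a w; rewrite ci_e; pose proof (not_occurs_e w); tauto. Qed.

Lemma occurs_split_at_vd t c : occurs_split_at t -> occurs_split_at (t ⊢ c).
Proof. intros Ht a w; rewrite ci_vd, !occurs_vd; pose proof (Ht a w); tauto. Qed.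

Lemma occurs_split_at_ci t1 t2 :
  assoc_at t2 -> occurs_split_at t1 -> occurs_split_at t2 -> occurs_split_at (t1 ∘ t2).
Proof.
  intros A2 S1 S2 a w; rewrite <- A2.
  pose proof (S1 a w); pose proof (S2 (a ∘ t1) w); pose proof (S2 t1 w); tauto.
Qed.

Lemma levi_at_e : levi_at e.
Proof.
  intros x z y Ay H; rewrite ci_e in H.
  exists y; split; [exact Ay | left; split; [symmetry; exact H | apply ci_e]].
Qed.

Lemma levi_at_vd w a : assoc_at w -> levi_at w -> levi_at (w ⊢ a).
Proof.
  intros Aw Lw x z y Ay H; rewrite ci_vd in H.
  destruct (e_or_vd y) as [-> | (y1 & b & ->)].
  - exists (w ⊢ a); split; [apply assoc_at_vd, Aw |].
    right; rewrite ci_e in H; rewrite ci_e, ci_vd; auto.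
  - rewrite ci_vd in H; apply vd_inj in H; destruct H as [H ->].
    destruct (Lw x z y1 (assoc_at_vd_inv _ _ Ay) H) as (u & Au & [[Hz Hy] | [Hx Hw]]);
      exists u; split; trivial.
    + left; rewrite ci_vd, Hy; auto.
    + right; rewrite ci_vd, Hw; auto.
Qed.

Lemma levi_at_ci p q : assoc_at p -> assoc_at q -> levi_at p -> levi_at q -> levi_at (p ∘ q).
Proof.
  intros Ap Aq Lp Lq x z y Ay H; rewrite <- Aq in H.
  destruct (Lq x (z ∘ p) y Ay H) as (u1 & Au1 & [[H1 H2] | [H1 H2]]).
  - symmetry in H1.
    destruct (Lp x z u1 Au1 H1) as (u2 & Au2 & [[H3 H4] | [H3 H4]]);
      exists u2; split; trivial.
    + left; split; trivial; rewrite <- Aq, H4; exact H2.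
    + right; split; trivial; rewrite <- H2, <- Aq, H4; reflexivity.
  - exists (p ∘ u1); split; [apply assoc_at_ci; trivial |].
    right; split.
    + rewrite H1, Au1; reflexivity.
    + rewrite Ay, H2; reflexivity.
Qed.

Lemma rigid_e : rigid e.
Proof. intros W _ U H; exact (proj2 (ci_eq_e _ _ (proj1 (ci_eq_e _ _ H)))). Qed.

Lemma vd_ci_shift x a W : assoc_at W -> (x ⊢ a) ∘ W = x ∘ ((e ⊢ a) ∘ W).
Proof. intros AW; rewrite <- AW, ci_vd, ci_e; reflexivity. Qed.

Lemma rigid_vd_ci_neq x a W U : rigid x -> assoc_at W -> (x ⊢ a) ∘ W ∘ U <> x.
Proof.
  intros Rx AW H; rewrite vd_ci_shift in H by exact AW.
  assert (Hea : (e ⊢ a) ∘ W = e).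
  { exact (Rx _ (assoc_at_ci _ _ (assoc_at_vd _ _ assoc_at_e) AW) U H). }
  exact (vd_neq_e _ _ (proj1 (ci_eq_e _ _ Hea))).
Qed.

Lemma rigid_vd x a : rigid x -> rigid (x ⊢ a).
Proof.
  intros Rx W AW U H.
  destruct (e_or_vd U) as [-> | (U1 & c & ->)].
  - rewrite ci_e in H; destruct (e_or_vd W) as [-> | (W1 & c & ->)]; [reflexivity | exfalso].
    rewrite ci_vd in H; apply vd_inj in H.
    apply (rigid_vd_ci_neq x a W1 e Rx (assoc_at_vd_inv _ _ AW)).
    rewrite ci_e; exact (proj1 H).
  - exfalso; rewrite ci_vd in H; apply vd_inj in H.
    exact (rigid_vd_ci_neq x a W U1 Rx AW (proj1 H)).
Qed.

Lemma regular_left_unit_at q : regular q -> left_unit_at q.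
Proof. intros (Uq & _); exact Uq. Qed.

Lemma regular_assoc_at q : regular q -> assoc_at q.
Proof. intros (_ & Aq & _); exact Aq. Qed.

Lemma regular_levi_at q : regular q -> levi_at q.
Proof. intros (_ & _ & Lq & _); exact Lq. Qed.

Lemma regular_cancel_at q : regular q -> cancel_at q.
Proof. intros (_ & _ & _ & Cq & _); exact Cq. Qed.

Lemma regular_occurs_split_at q : regular q -> occurs_split_at q.
Proof. intros (_ & _ & _ & _ & Sq & _); exact Sq. Qed.

Lemma regular_e : regular e.
Proof.
  refine (conj left_unit_at_e (conj assoc_at_e (conj levi_at_e
    (conj cancel_at_e (conj occurs_split_at_e _))))).
  intros p; rewrite ci_e; trivial.
Qed.

Lemma regular_vd q a : regular q -> regular (q ⊢ a).
Proof.
  intros (Uq & Aq & Lq & Cq & Sq & Rq).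
  refine (conj (left_unit_at_vd _ _ Uq) (conj (assoc_at_vd _ _ Aq) (conj (levi_at_vd _ _ Aq Lq)
    (conj (cancel_at_vd _ _ Cq) (conj (occurs_split_at_vd _ _ Sq) _))))).
  intros p Rp; rewrite ci_vd; auto using rigid_vd.
Qed.

Lemma regular_ci p q : regular p -> regular q -> regular (p ∘ q).
Proof.
  intros (Up & Ap & Lp & Cp & Sp & Rp) (Uq & Aq & Lq & Cq & Sq & Rq).
  refine (conj (left_unit_at_ci _ _ Aq Up) (conj (assoc_at_ci _ _ Ap Aq)
    (conj (levi_at_ci _ _ Ap Aq Lp Lq) (conj (cancel_at_ci _ _ Aq Cp Cq)
    (conj (occurs_split_at_ci _ _ Aq Sp Sq) _))))).
  intros r Rr; rewrite <- Aq; auto.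
Qed.

Lemma regular_rigid q : regular q -> rigid q.
Proof.
  intros (Uq & _ & _ & _ & _ & Rq); unfold left_unit_at in Uq.
  rewrite <- Uq; exact (Rq e rigid_e).
Qed.

Lemma prefix_regular_regular x : prefix_regular x -> regular x.
Proof. intros H; exact (H x e assoc_at_e (ci_e x)). Qed.

Lemma prefix_regular_e : prefix_regular e.
Proof. intros p q _ H; destruct (ci_eq_e _ _ H) as [-> _]; exact regular_e. Qed.

Lemma prefix_regular_vd y a : prefix_regular y -> prefix_regular (y ⊢ a).
Proof.
  intros Dy p q Aq H; destruct (e_or_vd q) as [-> | (q1 & c & ->)].
  - rewrite ci_e in H; subst p; apply regular_vd, prefix_regular_regular, Dy.
  - rewrite ci_vd in H; apply vd_inj in H.
    exact (Dy p q1 (assoc_at_vd_inv _ _ Aq) (proj1 H)).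
Qed.

Lemma prefix_regular_vd_inv y a : prefix_regular (y ⊢ a) -> prefix_regular y.
Proof.
  intros Dy p q Aq H; apply (Dy p (q ⊢ a) (assoc_at_vd _ _ Aq)).
  rewrite ci_vd, H; reflexivity.
Qed.

Lemma prefix_regular_ci x y : prefix_regular x -> prefix_regular y -> prefix_regular (x ∘ y).
Proof.
  intros Dx Dy p q Aq H.
  destruct (regular_levi_at _ (prefix_regular_regular _ Dy) p x q Aq H)
    as (u & Au & [[Hx _] | [-> Hy]]).
  - exact (Dx p u Au (eq_sym Hx)).
  - exact (regular_ci _ _ (prefix_regular_regular _ Dx) (Dy u q Aq Hy)).
Qed.

Lemma prefix_regular_prefix y u w : prefix_regular y -> assoc_at w -> u ∘ w = y -> prefix_regular u.
Proof.
  intros Dy Aw H p q Aq Hp; apply (Dy p (q ∘ w) (assoc_at_ci _ _ Aq Aw)).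
  rewrite <- Aw, Hp; exact H.
Qed.

Lemma good_regular x : good x -> regular x.
Proof. intros (Dx & _); exact (prefix_regular_regular _ Dx). Qed.

Lemma good_e : good e.
Proof.
  split; [exact prefix_regular_e |].
  exists e; split; [exact prefix_regular_e |]; split; trivial.
  intros w Hw; destruct (not_occurs_e w Hw).
Qed.

Lemma good_vd y z : good y -> good z -> good (y ⊢ z).
Proof.
  intros (Dy & sy & Dsy & Ly & Cy) (Dz & sz & Dsz & Lz & Cz).
  pose proof (regular_occurs_split_at _ (prefix_regular_regular _ Dsz)) as Ssz.
  split; [exact (prefix_regular_vd _ _ Dy) |].
  exists (sy ∘ sz ⊢ z); split; [exact (prefix_regular_vd _ _ (prefix_regular_ci _ _ Dsy Dsz)) |].
  split.
  - intros w Hw; apply occurs_vd in Hw; apply occurs_vd.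
    destruct Hw as [-> | Hw]; [left; reflexivity | right; apply Ssz; left; exact (Ly w Hw)].
  - intros w Hw; apply occurs_vd in Hw; destruct Hw as [-> | Hw].
    + split; [exact Dz |]; intros v Hv; apply occurs_vd; right; apply Ssz; right; exact (Lz v Hv).
    + apply Ssz in Hw; destruct Hw as [Hw | Hw];
        [destruct (Cy w Hw) as [Dw Lw] | destruct (Cz w Hw) as [Dw Lw]];
        split; trivial; intros v Hv; apply occurs_vd; right; apply Ssz; auto.
Qed.

Lemma good_ci x y : good x -> good y -> good (x ∘ y).
Proof.
  intros (Dx & sx & Dsx & Lx & Cx) (Dy & sy & Dsy & Ly & Cy).
  pose proof (regular_occurs_split_at _ (prefix_regular_regular _ Dy)) as Sy.
  pose proof (regular_occurs_split_at _ (prefix_regular_regular _ Dsy)) as Ssy.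
  split; [exact (prefix_regular_ci _ _ Dx Dy) |].
  exists (sx ∘ sy); split; [exact (prefix_regular_ci _ _ Dsx Dsy) |]; split.
  - intros w Hw; apply Sy in Hw; apply Ssy; destruct Hw as [Hw | Hw]; auto.
  - intros w Hw; apply Ssy in Hw; destruct Hw as [Hw | Hw];
      [destruct (Cx w Hw) as [Dw Lw] | destruct (Cy w Hw) as [Dw Lw]];
      split; trivial; intros v Hv; apply Ssy; auto.
Qed.

Lemma good_vd_l y z : good (y ⊢ z) -> good y.
Proof.
  intros (Dyz & s & Ds & L & C); split; [exact (prefix_regular_vd_inv _ _ Dyz) |].
  exists s; split; [exact Ds |]; split; [| exact C].
  intros w Hw; apply L, occurs_vd; right; exact Hw.
Qed.

Lemma good_vd_r y z : good (y ⊢ z) -> good z.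
Proof.
  intros (_ & s & Ds & L & C).
  destruct (C z (L z (proj2 (occurs_vd z y z) (or_introl eq_refl)))) as [Dz Lz].
  split; [exact Dz |]; exists s; auto.
Qed.

Lemma good_prefix y u w : good y -> good w -> u ∘ w = y -> good u.
Proof.
  intros (Dy & s & Ds & L & C) Gw H.
  pose proof (good_regular _ Gw) as Rw.
  split; [exact (prefix_regular_prefix _ _ _ Dy (regular_assoc_at _ Rw) H) |].
  exists s; split; [exact Ds |]; split; [| exact C].
  intros v Hv; apply L; rewrite <- H; apply (regular_occurs_split_at _ Rw); left; exact Hv.
Qed.

Lemma good_e_ci x : good x -> e ∘ x = x.
Proof. intros Gx; exact (regular_left_unit_at _ (good_regular _ Gx)). Qed.

Lemma good_ci_eq_iff x y z w : good y -> good w ->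
  (x ∘ y = z ∘ w <->
   exists u, good u /\ ((z = x ∘ u /\ u ∘ w = y) \/ (x = z ∘ u /\ u ∘ y = w))).
Proof.
  intros Gy Gw.
  pose proof (regular_assoc_at _ (good_regular _ Gy)) as Ay.
  pose proof (good_regular _ Gw) as Rw.
  split.
  - intros H.
    destruct (regular_levi_at _ Rw x z y Ay H) as (u & _ & [[Hz Hy] | [Hx Hw]]); exists u.
    + split; [exact (good_prefix _ _ _ Gy Gw Hy) | left; auto].
    + split; [exact (good_prefix _ _ _ Gw Gy Hw) | right; auto].
  - intros (u & _ & [[-> <-] | [-> <-]]).
    + rewrite (regular_assoc_at _ Rw); reflexivity.
    + rewrite Ay; reflexivity.
Qed.

Lemma good_ci_cancel_l x y z : good x -> good y -> good z -> x ∘ y = x ∘ z -> y = z.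
Proof.
  intros Gx Gy Gz H.
  destruct (proj1 (good_ci_eq_iff x y x z Gy Gz) H) as (u & Gu & Hu).
  assert (u = e) as ->.
  { apply (regular_rigid _ (good_regular _ Gx) u (regular_assoc_at _ (good_regular _ Gu)) e).
    rewrite ci_e; destruct Hu as [[Hx _] | [Hx _]]; symmetry; exact Hx. }
  pose proof (good_e_ci y Gy); pose proof (good_e_ci z Gz).
  destruct Hu as [[_ Hzy] | [_ Hyz]]; congruence.
Qed.

Lemma good_ci_cancel_r x y z : good x -> y ∘ x = z ∘ x -> y = z.
Proof. intros Gx; exact (regular_cancel_at _ (good_regular _ Gx) y z). Qed.

Local Notation val := (rel_val M e vd ci good_formula).
Local Notation mk := (rel_mk M e vd ci good_formula good iDom_good).

(* The translated equality and operations act on representatives, so each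
   axiom of Seq⁺ is, up to conversion, a fact about good elements. *)
Lemma good_part_defines_model : defines_model_of good_translation M e vd ci SeqPlus_ax.
Proof.
  apply (relativization_defines_model M e vd ci good_formula good iDom_good good_e good_vd good_ci).
  pose proof (rel_val_P M e vd ci good_formula good iDom_good) as G.
  split; [split; [| split; [| split; [| split]]] | split; [| split]].
  - intros x y; exact (vd_neq_e (val x) (val y)).
  - intros x1 x2 y1 y2; exact (vd_inj (val x1) (val x2) (val y1) (val y2)).
  - intros x; exact (ci_e (val x)).
  - intros x y z; exact (ci_vd (val x) (val y) (val z)).
  - intros x; destruct (e_or_vd (val x)) as [H | (y & z & H)]; [left; exact H | right].
    pose proof (G x) as Gx; rewrite H in Gx.
    exists (mk y (good_vd_l y z Gx)), (mk z (good_vd_r y z Gx)); exact H.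
  - intros x; split; [exact (ci_e (val x)) | exact (good_e_ci (val x) (G x))].
  - intros x y z w; split.
    + intros H; destruct (proj1 (good_ci_eq_iff _ _ _ _ (G y) (G w)) H) as (u & Gu & Hu).
      exists (mk u Gu); exact Hu.
    + intros (u & Hu); apply (good_ci_eq_iff _ _ _ _ (G y) (G w)).
      exists (val u); exact (conj (G u) Hu).
  - intros x y z [H | H].
    + exact (good_ci_cancel_l _ _ _ (G x) (G y) (G z) H).
    + exact (good_ci_cancel_r _ _ _ (G x) H).
Qed.

End GoodElements.

Theorem theorem6 : interprets Seq_ax SeqPlus_ax.
Proof.
  exists good_translation.
  intros M e vd ci (vd_neq_e & vd_inj & ci_e & ci_vd & e_or_vd).
  exact (good_part_defines_model M e vd ci vd_neq_e vd_inj ci_e ci_vd e_or_vd).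
Qed.
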